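(* Every path-restricted ordered bipartite graph $G=(U,V,E)$ has at most $n\log n+O(n)$ edges, where $n=|U|+|V|$. Moreover the bound is tight up to constant factors: for infinitely many $n$ there exists a path-restricted ordered bipartite graph on $n$ vertices with $\Omega(n\log n)$ edges.
   Context: $\log$ denotes the binary logarithm. An ordered bipartite graph is $G=(U,V,E)$ where $U,V$ are disjoint finite sets, each carrying a strict total order (both written $<$), and $E\subseteq U\times V$. A path is a sequence of edges in which consecutive edges share a vertex. A path visiting the vertices of $U$ in the order $u_1,\dots,u_k$ and those of $V$ in the order $v_1,\dots,v_l$ is a forward path if either $u_1<\dots<u_k$ and $v_1<\dots<v_l$, or $u_1>\dots>u_k$ and $v_1>\dots>v_l$. For $x\le y$ in $U$ write $\langle x,y\rangle=\{u\in U: x\le u\le y\}$, and similarly in $V$. If $u_a<u_b$ are the smallest and largest $U$-vertices and $v_c<v_d$ the smallest and largest $V$-vertices of a forward path $P$, the range of $P$ is $\{\langle u_a,u_b\rangle,\langle v_c,v_d\rangle\}$. A vertex of $P$ is non-terminal if it is adjacent along $P$ to two vertices of $P$. An edge is a back edge to $P$ if either it is $(u_a,v_j)$ with $v_j\in\langle v_c,v_d\rangle$ and $v_j>v'$ for some non-terminal vertex $v'\in V$ of $P$, or it is $(u_i,v_c)$ with $u_i\in\langle u_a,u_b\rangle$ and $u_i>u'$ for some non-terminal vertex $u'\in U$ of $P$. $G$ is a path-restricted ordered bipartite graph (PRBG) if no forward path in $G$ has a back edge in $E$. *)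

From Stdlib Require Import Reals.
From mathcomp Require Import all_boot.
Set Implicit Arguments. Unset Strict Implicit. Unset Printing Implicit Defensive.

(* An ordered bipartite graph: U = 'I_p, V = 'I_q (each with its natural
   strict total order), E a set of pairs (u, v) in U x V.  Any finite totally
   ordered set is order-isomorphic to an ordinal, so this is no loss. *)

Definition vtx (p q : nat) := ('I_p + 'I_q)%type.

Definition adjb p q (E : {set 'I_p * 'I_q}) (x y : vtx p q) : bool :=
  match x, y with
  | inl u, inr v => (u, v) \in E
  | inr v, inl u => (u, v) \in E
  | _, _ => false
  end.

(* A path, given by the sequence of vertices it traverses (consecutive edges
   e_i = {w_(i-1), w_i} share the vertex w_i); at least one edge. *)
Definition is_walk p q (E : {set 'I_p * 'I_q}) (w : seq (vtx p q)) : bool :=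
  match w with
  | x :: s => (0 < size s) && path (adjb E) x s
  | [::] => false
  end.

Definition Uvs p q (w : seq (vtx p q)) : seq 'I_p :=
  pmap (fun x => if x is inl u then Some u else None) w.
Definition Vvs p q (w : seq (vtx p q)) : seq 'I_q :=
  pmap (fun x => if x is inr v then Some v else None) w.

Definition forward p q (w : seq (vtx p q)) : bool :=
  (sorted (fun a b : 'I_p => a < b) (Uvs w) && sorted (fun a b : 'I_q => a < b) (Vvs w))
  || (sorted (fun a b : 'I_p => b < a) (Uvs w) && sorted (fun a b : 'I_q => b < a) (Vvs w)).

Definition is_min n (s : seq 'I_n) (x : 'I_n) : Prop :=
  x \in s /\ forall y, y \in s -> x <= y.
Definition is_max n (s : seq 'I_n) (x : 'I_n) : Prop :=
  x \in s /\ forall y, y \in s -> y <= x.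

(* non-terminal vertices: those adjacent along the path to two vertices of it,
   i.e. all but the first and the last vertex of the walk *)
Definition interior T (w : seq T) : seq T := behead (take (size w).-1 w).

Definition back_edge p q (w : seq (vtx p q)) (e : 'I_p * 'I_q) : Prop :=
  (exists ua vc vd v',
      is_min (Uvs w) ua /\ is_min (Vvs w) vc /\ is_max (Vvs w) vd /\
      e.1 = ua /\ vc <= e.2 <= vd /\
      inr v' \in interior w /\ v' < e.2)
  \/
  (exists vc ua ub u',
      is_min (Vvs w) vc /\ is_min (Uvs w) ua /\ is_max (Uvs w) ub /\
      e.2 = vc /\ ua <= e.1 <= ub /\
      inl u' \in interior w /\ u' < e.1).

Definition PRBG p q (E : {set 'I_p * 'I_q}) : Prop :=
  forall w : seq (vtx p q), is_walk E w -> forward w ->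
  forall e, e \in E -> ~ back_edge w e.

Definition log2 (x : R) : R := Rdiv (ln x) (ln 2).

From Pilot Require Import Defs.
From Stdlib Require Import Reals Lra.
From mathcomp Require Import all_boot zify.
Set Implicit Arguments. Unset Strict Implicit. Unset Printing Implicit Defensive.

(* Charge every edge (u, v) that is not the last edge at u to its
   gap level l = floor (log (w - v)), w the next neighbour of u after v, and to
   the vertex v if no u' < u has an edge (u', v) of gap level l, to u otherwise.
   Two edges (u, v), (u, v') with v < v' charged to the same (u, l) are
   impossible: if (u1, v) is the edge of level l at v with u1 < u and w1 its
   next neighbour, then w1 - v < 2^(l+1) <= w' - v, so u1 v u w' is a forward
   path with the back edge (u1, w1); two edges charged to the same (v, l) are
   excluded by the choice of leader.  Hence |E| <= |U| + n (log |V| + 1).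

   On U = V = {0, ..., 2^k - 1}, join u and v at scale s when they
   share their s low bits, bit s - 1 of u is 0 and u / 2^s + v / 2^s = 2^(k-s) - 1.
   There are at least k 2^(k-1) edges.  The scale of an edge is the least level
   t at which its endpoints lie in complementary 2^t-blocks, and at a fixed
   vertex it decreases as the other endpoint grows.  The graph is symmetric, so
   by reversal and exchange of U and V it suffices to exclude back edges (a, x)
   of the first kind to ascending paths a b1 a2 ...  If (a, b1) has scale t + 1,
   the path stays in the complementary 2^t-blocks of a2 and b1, hence so does x,
   which forces the scale of (a, x) to be both <= t and > t. *)

Lemma head_leq_sorted n (a : 'I_n) s :
  sorted (fun a b : 'I_n => a < b) (a :: s) -> {in a :: s, forall x : 'I_n, a <= x}.
Proof.
move=> /= srt x; rewrite inE => /orP [/eqP -> //|xs]; apply: ltnW.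
have lt_trans : transitive (fun a b : 'I_n => a < b) by move=> ? ? ?; apply: ltn_trans.
by move: (order_path_min lt_trans srt) => /allP; apply.
Qed.

Lemma is_min_sorted_head n (a x : 'I_n) s :
  sorted (fun a b : 'I_n => a < b) (a :: s) -> is_min (a :: s) x -> x = a.
Proof.
move=> srt [xs xmin]; apply/val_inj/eqP.
by rewrite eqn_leq xmin ?mem_head // (head_leq_sorted srt).
Qed.

Lemma pmap_rev (A B : Type) (f : A -> option B) s : pmap f (rev s) = rev (pmap f s).
Proof.
elim: s => [|x s IH] //; rewrite rev_cons -cats1 pmap_cat IH /=.
by case: (f x) => [y|] /=; rewrite ?cats0 // rev_cons cats1.
Qed.

Lemma interior_rev (T : Type) (s : seq T) : Defs.interior (rev s) = rev (Defs.interior s).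
Proof.
have interior_cons_rcons (a b : T) m : Defs.interior (a :: rcons m b) = m.
  by rewrite /Defs.interior /= size_rcons /= -cats1 take_size_cat.
case: s => [|a s] //; case/lastP: s => [|m b] //.
by rewrite rev_cons rev_rcons rcons_cons !interior_cons_rcons.
Qed.

Lemma mem_interior (T : eqType) (s : seq T) x : x \in Defs.interior s -> x \in behead s.
Proof. rewrite /Defs.interior; case: s => [|a [|b s]] //=; exact: mem_take. Qed.

Lemma is_min_rev n (s : seq 'I_n) x : is_min s x -> is_min (rev s) x.
Proof. by case=> xs xmin; split=> [|y]; rewrite mem_rev //; apply: xmin. Qed.

Lemma is_max_rev n (s : seq 'I_n) x : is_max s x -> is_max (rev s) x.
Proof. by case=> xs xmax; split=> [|y]; rewrite mem_rev //; apply: xmax. Qed.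

Section Walks.
Variables p q : nat.
Implicit Types (E : {set 'I_p * 'I_q}) (w : seq (vtx p q)).

Lemma mem_Vvs w v : (v \in Vvs w) = (inr v \in w).
Proof. by elim: w => [|[u'|v'] w IH] //=; rewrite inE IH. Qed.

Lemma adjbC E : symmetric (adjb E).
Proof. by case=> [u|v] [u'|v']. Qed.

Definition ascending w :=
  sorted (fun a b : 'I_p => a < b) (Uvs w) && sorted (fun a b : 'I_q => a < b) (Vvs w).

Lemma ascending_behead w : ascending w -> ascending (behead w).
Proof.
case: w => [|[u|v] w] //; rewrite /ascending /= => /andP [su sv].
  by rewrite (path_sorted su) sv.
by rewrite su (path_sorted sv).
Qed.

Definition side_lt (x y : vtx p q) :=
  match x, y with
  | inl u, inl u' => u < u'
  | inr v, inr v' => v < v'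
  | _, _ => false
  end.

Lemma ascending_side_lt E x y z s :
  adjb E x y -> adjb E y z -> ascending [:: x, y, z & s] -> side_lt x z.
Proof.
case: x y z => [u|v] [u'|v'] [u''|v''] //= _ _ /andP [su sv].
  by case/andP: su.
by case/andP: sv.
Qed.

Lemma ascending_path_all E (P : pred (vtx p q)) :
  (forall x y z, adjb E x y -> adjb E y z -> side_lt x z -> P x -> P y -> P z) ->
  forall x y s, path (adjb E) x (y :: s) -> ascending [:: x, y & s] ->
  P x -> P y -> all P [:: x, y & s].
Proof.
move=> Pstep x y s; elim: s x y => [|z s IH] x y /=; first by move=> _ _ -> ->.
move=> /and3P [xy yz yp] asc Px Py; rewrite Px /=.
apply: IH => //; first by rewrite /= yz.
- exact: ascending_behead asc.
- exact: Pstep xy yz (ascending_side_lt xy yz asc) Px Py.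
Qed.

Lemma is_walk_rev E w : is_walk E w -> is_walk E (rev w).
Proof.
case: w => [|x s] //= /andP [s_gt0 xs].
rewrite lastI rev_rcons /= size_rev size_belast s_gt0 /= rev_path.
by rewrite (eq_path (e' := adjb E)) // => a b; apply: adjbC.
Qed.

Lemma back_edge_rev w e : back_edge w e -> back_edge (rev w) e.
Proof.
rewrite /back_edge /Uvs /Vvs !pmap_rev interior_rev.
case=> [[ua [vc [vd [v' [? [? [? ?]]]]]]]|[vc [ua [ub [u' [? [? [? ?]]]]]]]].
- left; exists ua, vc, vd, v'; rewrite mem_rev.
  by split; [exact: is_min_rev | split; [exact: is_min_rev | split; [exact: is_max_rev|]]].
- right; exists vc, ua, ub, u'; rewrite mem_rev.
  by split; [exact: is_min_rev | split; [exact: is_min_rev | split; [exact: is_max_rev|]]].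
Qed.

Lemma prbg_ascending E :
  (forall w, is_walk E w -> ascending w -> forall e, e \in E -> ~ back_edge w e) -> PRBG E.
Proof.
move=> noback w walk /orP [fwd|bwd] e eE be; first exact: noback fwd e eE be.
apply: (noback (rev w) (is_walk_rev walk) _ e eE (back_edge_rev be)).
by rewrite /ascending /Uvs /Vvs !pmap_rev !rev_sorted.
Qed.

Definition left_back_edge w (e : 'I_p * 'I_q) : Prop :=
  exists ua vc vd v',
    is_min (Uvs w) ua /\ is_min (Vvs w) vc /\ is_max (Vvs w) vd /\ e.1 = ua /\
    vc <= e.2 <= vd /\ inr v' \in Defs.interior w /\ v' < e.2.

End Walks.

Section Swap.
Variables p q : nat.
Implicit Types (w : seq (vtx p q)).

Definition swap_vtx (x : vtx p q) : vtx q p :=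
  match x with inl u => inr u | inr v => inl v end.

Lemma Uvs_swap w : Uvs (map swap_vtx w) = Vvs w.
Proof. by elim: w => [|[u|v] w IH] //=; rewrite IH. Qed.

Lemma Vvs_swap w : Vvs (map swap_vtx w) = Uvs w.
Proof. by elim: w => [|[u|v] w IH] //=; rewrite IH. Qed.

Lemma ascending_swap w : ascending (map swap_vtx w) = ascending w.
Proof. by rewrite /ascending Uvs_swap Vvs_swap andbC. Qed.

Lemma is_walk_swap (E : {set 'I_p * 'I_q}) (E' : {set 'I_q * 'I_p}) w :
  (forall u v, ((v, u) \in E') = ((u, v) \in E)) -> is_walk E' (map swap_vtx w) = is_walk E w.
Proof.
move=> E'E; case: w => [|x s] //=; rewrite size_map; congr andb.
by elim: s x => [|y s IH] [u|v] //=; rewrite IH; case: y => [u'|v'] //=; rewrite E'E.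
Qed.

Lemma back_edge_swap w e :
  back_edge w e -> left_back_edge w e \/ left_back_edge (map swap_vtx w) (e.2, e.1).
Proof.
case=> [|[vc [ua [ub [u' [? [? [? [? [? [? ?]]]]]]]]]]]; first by left.
right; exists vc, ua, ub, u'; rewrite Uvs_swap Vvs_swap; do 6 (split => //).
by rewrite /Defs.interior size_map -map_take behead_map; apply/mapP; exists (inl u').
Qed.

End Swap.

Section SymmetricGraphs.
Variables (n : nat) (E : {set 'I_n * 'I_n}).
Hypothesis E_sym : forall u v, ((v, u) \in E) = ((u, v) \in E).

Lemma prbg_symmetric :
  (forall w, is_walk E w -> ascending w -> forall e, e \in E -> ~ left_back_edge w e) ->
  PRBG E.
Proof.
move=> noback; apply: prbg_ascending => w walk asc [u v] uv /back_edge_swap [] //.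
  exact: noback.
apply: noback; rewrite ?ascending_swap //=; last by rewrite E_sym.
by rewrite (is_walk_swap _ E_sym).
Qed.

End SymmetricGraphs.

Section UpperBound.
Variables (p q : nat) (E : {set 'I_p * 'I_q}).
Hypothesis prbgE : PRBG E.

(* The forward path u1 v u x has the back edge (u1, w1). *)
Lemma prbg_pattern (u1 u : 'I_p) (v w1 x : 'I_q) :
  u1 < u -> v < w1 <= x ->
  (u1, v) \in E -> (u1, w1) \in E -> (u, v) \in E -> (u, x) \in E -> False.
Proof.
move=> u1u /andP [vw1 w1x] u1v u1w1 uv ux.
have vx : v < x := leq_trans vw1 w1x.
apply: (prbgE (w := [:: inl u1; inr v; inl u; inr x]) _ _ u1w1).
- by rewrite /is_walk /= u1v uv ux.
- by rewrite /forward /Uvs /Vvs /= u1u vx.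
left; exists u1, v, x, v; rewrite /Uvs /Vvs /=.
do !split; rewrite ?inE ?eqxx ?orbT ?(ltnW vw1) //;
  by move=> y; rewrite !inE => /orP [] /eqP ->; rewrite ?(ltnW u1u) ?(ltnW vx).
Qed.

Definition next_nbr (u : 'I_p) (v : 'I_q) : option 'I_q :=
  [pick w | [&& (u, w) \in E, v < w & [forall x, ((u, x) \in E) && (v < x) ==> (w <= x)]]].

Variant next_nbr_spec (u : 'I_p) (v : 'I_q) : option 'I_q -> Type :=
| NextNbrNone of (forall x, (u, x) \in E -> x <= v) : next_nbr_spec u v None
| NextNbrSome w of (u, w) \in E & v < w & (forall x, (u, x) \in E -> v < x -> w <= x) :
    next_nbr_spec u v (Some w).

Lemma next_nbrP u v : next_nbr_spec u v (next_nbr u v).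
Proof.
rewrite /next_nbr; case: pickP => [w /and3P [uw vw /forallP wmin]|none].
  by constructor=> // x ux vx; have /implyP := wmin x; apply; rewrite ux.
constructor=> x ux; rewrite leqNgt; apply/negP => vx.
have [w /andP [uw vw] wmin] :=
  @arg_minnP _ x (fun y : 'I_q => ((u, y) \in E) && (v < y)) val (introT andP (conj ux vx)).
have := none w; rewrite uw vw /=; move/negP; apply.
by apply/forallP => y; apply/implyP; apply: wmin.
Qed.

Definition gap_level u v : nat :=
  if next_nbr u v is Some w then trunc_log 2 (w - v) else 0.

Definition level_leader (u : 'I_p) (v : 'I_q) : bool :=
  [forall u' : 'I_p, (u' < u) ==>
     ~~ [&& (u', v) \in E, next_nbr u' v != None & gap_level u' v == gap_level u v]].

(* [inl u]: the last edge at u; [inr (x, l)]: charged to the vertex x at gap level l. *)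
Definition charge (e : 'I_p * 'I_q) : 'I_p + ('I_p + 'I_q) * 'I_(trunc_log 2 q).+1 :=
  if next_nbr e.1 e.2 is Some _ then
    inr (if level_leader e.1 e.2 then inr e.2 else inl e.1, inord (gap_level e.1 e.2))
  else inl e.1.

Lemma gap_level_lt u v : gap_level u v < (trunc_log 2 q).+1.
Proof.
rewrite /gap_level; case: next_nbr => [w|] //; rewrite ltnS.
by apply: leq_trunc_log; have := ltn_ord w; lia.
Qed.

Lemma follower_gap_level_neq u (v v' : 'I_q) :
  (u, v) \in E -> (u, v') \in E -> v < v' -> next_nbr u v' != None ->
  ~~ level_leader u v -> gap_level u v != gap_level u v'.
Proof.
move=> uv uv' vv'; rewrite /level_leader negb_forall => nxt' /existsP [u1].
rewrite negb_imply negbK => /andP [u1u /and3P [u1v nxt1 /eqP lvl1]]; apply/eqP => lvl.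
move: nxt' nxt1 lvl1 lvl; rewrite /gap_level.
case: next_nbrP => [_|w' uw' v'w' _] // _; case: next_nbrP => [_|w1 u1w1 vw1 _] // _.
case: next_nbrP => [/(_ _ uv') | w uw vw wmin]; first by rewrite leqNgt vv'.
have wv' := wmin _ uv' vv' => lvl1 lvl.
have b1 := trunc_log_bounds (isT : 1 < 2) (_ : 0 < w - v).
have b2 := trunc_log_bounds (isT : 1 < 2) (_ : 0 < w' - v').
have b3 := trunc_log_bounds (isT : 1 < 2) (_ : 0 < w1 - v).
have {b1}/andP [b1 _] := b1 ltac:(lia).
have {b2}/andP [b2 _] := b2 ltac:(lia).
have {b3}/andP [_ b3] := b3 ltac:(lia).
rewrite -lvl in b2; rewrite lvl1 expnS in b3.
by apply: (prbg_pattern u1u _ u1v u1w1 uv uw'); lia.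
Qed.

Lemma charge_inj : {in E &, injective charge}.
Proof.
have last_nbr u v : next_nbr u v = None -> forall x, (u, x) \in E -> x <= v.
  by case: next_nbrP.
move=> [u v] [u' v'] uv uv'; rewrite /charge /=.
case nxt: (next_nbr u v) => [w|]; case nxt': (next_nbr u' v') => [w'|] //; last first.
  move=> [eu]; subst u'; congr pair; apply/val_inj/eqP.
  by rewrite eqn_leq (last_nbr _ _ nxt _ uv') (last_nbr _ _ nxt' _ uv).
move=> [+ /(congr1 val)]; rewrite /= !inordK ?gap_level_lt // => + lvl.
case lead: (level_leader u v); case lead': (level_leader u' v') => // -[eq]; subst.
- congr pair; case: (ltngtP u u') => [lt|lt|/val_inj //].
    by move/forallP: lead' => /(_ u); rewrite lt uv nxt lvl eqxx.
  by move/forallP: lead => /(_ u'); rewrite lt uv' nxt' lvl eqxx.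
- congr pair; case: (ltngtP v v') => [lt|lt|/val_inj //].
    by have := follower_gap_level_neq uv uv' lt; rewrite nxt' lead lvl eqxx => /(_ isT isT).
  by have := follower_gap_level_neq uv' uv lt; rewrite nxt lead' lvl eqxx => /(_ isT isT).
Qed.

Lemma card_prbg_le : #|E| <= p + (p + q) * (trunc_log 2 q).+1.
Proof.
rewrite -(card_in_imset charge_inj); apply: leq_trans (max_card _) _.
by rewrite card_sum card_prod card_sum !card_ord.
Qed.

End UpperBound.

Lemma expn2_gt0 t : 0 < 2 ^ t.
Proof. by rewrite expn_gt0. Qed.

Section Construction.
Variable k : nat.

Definition complementary t (u v : nat) : bool := u %/ 2^t + v %/ 2^t + 1 == 2^(k - t).

(* u and v agree on their s low bits, bit s - 1 of u is 0 (when s > 0), and the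
   remaining k - s high bits of u and v are complementary. *)
Definition scale_edge s (u v : nat) : bool :=
  [&& s <= k, 2 * (u %% 2^s) < 2^s, u %% 2^s == v %% 2^s & complementary s u v].

Lemma expn2_subS t : t < k -> 2^(k - t) = 2 * 2^(k - t.+1).
Proof. by move=> tk; rewrite -expnS; congr expn; lia. Qed.

Lemma complementaryC t u v : complementary t u v = complementary t v u.
Proof. by rewrite /complementary (addnC (u %/ _)). Qed.

Lemma complementaryS t u v : t < k -> complementary t u v -> complementary t.+1 u v.
Proof.
move=> tk /eqP c; apply/eqP; move: c; rewrite expnSr !divnMA expn2_subS //; lia.
Qed.

Lemma odd_complementary t u v :
  t < k -> complementary t u v -> odd (u %/ 2^t) != odd (v %/ 2^t).
Proof. by move=> tk /eqP; rewrite expn2_subS //; lia. Qed.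

Lemma odd_div_eqmod t u v :
  u %% 2^t.+1 = v %% 2^t.+1 -> odd (u %/ 2^t) = odd (v %/ 2^t).
Proof.
move=> /(congr1 (divn^~ (2^t))); rewrite expnS -!modn_divl !modn2.
by move=> /(congr1 odd); rewrite !oddb.
Qed.

Lemma complementary_trans t u u' v v' :
  complementary t u v -> complementary t u' v -> complementary t u' v' -> complementary t u v'.
Proof.
rewrite /complementary => /eqP + /eqP + /eqP.
by move: (u %/ 2^t) (u' %/ 2^t) (v %/ 2^t) (v' %/ 2^t) (2^(k - t)) => *; apply/eqP; lia.
Qed.

Lemma complementary_block_r t u v v' :
  complementary t u v -> complementary t u v' -> v %/ 2^t = v' %/ 2^t.
Proof.
rewrite /complementary => /eqP + /eqP.
by move: (u %/ 2^t) (v %/ 2^t) (v' %/ 2^t) (2^(k - t)) => *; lia.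
Qed.

Lemma scale_edge_sym s u v : scale_edge s u v = scale_edge s v u.
Proof.
rewrite /scale_edge complementaryC.
by apply/and4P/and4P => -[sk + /eqP e c]; rewrite e => lt; split.
Qed.

Lemma scale_edge_complementary s t u v :
  scale_edge s u v -> s <= t <= k -> complementary t u v.
Proof.
case/and4P=> _ _ _ c; elim: t => [|t IH] /andP [st tk]; first by case: s st c.
move: st; rewrite leq_eqVlt => /orP [/eqP <- // | st].
by apply: (complementaryS tk); apply: IH; rewrite -ltnS st ltnW.
Qed.

Lemma complementaryE s t u v : scale_edge s u v -> t < k -> complementary t u v = (s <= t).
Proof.
move=> e tk; case: (leqP s t) => st.
  by apply: scale_edge_complementary e _; rewrite st ltnW.
apply/negP => /(odd_complementary tk); rewrite (@odd_div_eqmod _ u v) ?eqxx //.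
case/and4P: e => _ _ /eqP e _.
by rewrite -(modn_dvdm u (dvdn_exp2l 2 st)) -(modn_dvdm v (dvdn_exp2l 2 st)) e.
Qed.

Lemma scale_edge_even t u v : scale_edge t.+1 u v -> ~~ odd (u %/ 2^t).
Proof.
case/and4P=> _ low _ _; suff : u %/ 2^t %% 2 = 0 by lia.
by rewrite modn_divl -expnS divn_small //; move: low; rewrite expnS; lia.
Qed.

Lemma scale_edge_lt s u v : scale_edge s u v -> u < 2^k.
Proof.
case/and4P=> sk _ _ /eqP c.
by rewrite -(subnK sk) expnD -ltn_divLR ?expn2_gt0 // -c addnAC addn1 leq_addr.
Qed.

Lemma scale_edge_inj s u v v' : scale_edge s u v -> scale_edge s u v' -> v = v'.
Proof.
case/and4P=> _ _ /eqP m /eqP c; case/and4P=> _ _ /eqP m' /eqP c'.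
by rewrite (divn_eq v (2^s)) (divn_eq v' (2^s)) -m -m'; congr (_ * _ + _); lia.
Qed.

Lemma scale_edge_scale_uniq s s' u v : scale_edge s u v -> scale_edge s' u v -> s = s'.
Proof.
wlog ss' : s s' / s <= s'.
  by move=> H e e'; case: (leqP s s') => [|/ltnW] ss'; [apply: H | apply/esym; apply: H].
move=> e e'; case: (ltngtP s s') ss' => // ss' _.
have sk : s < k by case/and4P: e' => s'k _ _ _; apply: leq_trans s'k.
by move: (complementaryE e' sk); rewrite (complementaryE e sk) leqnn leqNgt ss'.
Qed.

Lemma scale_edge_lt_of_scale s s' u u' v :
  scale_edge s u v -> scale_edge s' u' v -> s' < s -> u < u'.
Proof.
case: s => // t e e' s't.
have tk : t < k by case/and4P: e.
have /eqP c' := scale_edge_complementary e' (introT andP (conj s't (ltnW tk))).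
have /eqP c := scale_edge_complementary e (introT andP (conj (leqnn _) tk)).
have eu := scale_edge_even e; rewrite scale_edge_sym in e; have ev := scale_edge_even e.
have : u %/ 2^t < u' %/ 2^t.
  by move: c c'; rewrite expnSr !divnMA (expn2_subS tk); lia.
by apply: contraTT; rewrite -!leqNgt; apply: leq_div2r.
Qed.

Lemma scale_edge_mono s s' u u' v :
  scale_edge s u v -> scale_edge s' u' v -> u < u' -> s' < s.
Proof.
move=> e e' uu'; case: (ltngtP s' s) => // [ss'|eqs].
  by move: (scale_edge_lt_of_scale e' e ss'); rewrite ltnNge ltnW.
rewrite eqs scale_edge_sym in e'; rewrite scale_edge_sym in e.
by move: uu'; rewrite (scale_edge_inj e e') ltnn.
Qed.

Lemma complementary_shift s s' t u u' v :
  scale_edge s u v -> scale_edge s' u' v -> u < u' -> t < k ->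
  complementary t u v -> complementary t u' v.
Proof.
move=> e e' uu' tk; rewrite (complementaryE e tk) (complementaryE e' tk) => st.
exact: leq_trans (ltnW (scale_edge_mono e e' uu')) st.
Qed.

Lemma scale_edge_block t s a b x :
  scale_edge t.+1 a b -> scale_edge s a x -> b < x -> x %/ 2^t = b %/ 2^t -> False.
Proof.
move=> ab ax bx xb; have tk : t < k by case/and4P: ab.
case: (leqP s t) => st.
  have := complementaryE ab tk; rewrite ltnn /complementary -xb.
  by rewrite -/(complementary t a x) (complementaryE ax tk) st.
rewrite scale_edge_sym in ab; rewrite scale_edge_sym in ax.
by move: (scale_edge_mono ab ax bx); rewrite ltnNge st.
Qed.

Definition scale_graph : {set 'I_(2^k) * 'I_(2^k)} :=
  [set e : 'I_(2^k) * 'I_(2^k) | [exists s : 'I_k.+1, scale_edge s e.1 e.2]].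

Lemma scale_graphP (u v : 'I_(2^k)) :
  reflect (exists s, scale_edge s u v) ((u, v) \in scale_graph).
Proof.
rewrite inE; apply: (iffP existsP) => [[s e]|[s e]]; first by exists s.
have sk : s < k.+1 by case/and4P: e.
by exists (Ordinal sk).
Qed.

Lemma scale_graph_sym u v : ((v, u) \in scale_graph) = ((u, v) \in scale_graph).
Proof. by apply/scale_graphP/scale_graphP => -[s e]; exists s; rewrite scale_edge_sym. Qed.

Definition in_blocks t a b (z : vtx (2^k) (2^k)) : bool :=
  match z with inl u => complementary t u b | inr v => complementary t a v end.

Lemma ascending_path_in_blocks t (a b : 'I_(2^k)) x y s :
  t < k -> complementary t a b ->
  path (adjb scale_graph) x (y :: s) -> ascending [:: x, y & s] ->
  in_blocks t a b x -> in_blocks t a b y -> all (in_blocks t a b) [:: x, y & s].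
Proof.
move=> tk ab; apply: ascending_path_all => -[u|v] [u1|v1] [u2|v2] //=.
- move=> /scale_graphP [s1 e] /scale_graphP [s2 e'] uu2 ub av1.
  have u2v1 := complementary_shift e e' uu2 tk (complementary_trans ub ab av1).
  exact: complementary_trans u2v1 av1 ab.
- move=> /scale_graphP [s1 e] /scale_graphP [s2 e'] vv2 av u1b.
  rewrite scale_edge_sym in e; rewrite scale_edge_sym in e'.
  have vu1 : complementary t v u1 by rewrite complementaryC (complementary_trans u1b ab av).
  have := complementary_shift e e' vv2 tk vu1; rewrite complementaryC => u1v2.
  exact: complementary_trans ab u1b u1v2.
Qed.

Lemma ascending_path_no_back_edge (a b1 x v' vd : 'I_(2^k)) r :
  (a, b1) \in scale_graph -> path (adjb scale_graph) (inr b1) r ->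
  ascending [:: inl a, inr b1 & r] -> inr v' \in inr b1 :: r -> inr vd \in inr b1 :: r ->
  v' < x <= vd -> (a, x) \notin scale_graph.
Proof.
move=> ab walk asc v'in vdin /andP [v'x xvd]; apply/negP => /scale_graphP [sx ax].
case: r walk asc v'in vdin => [_ _|[a2|b2] r] //.
  by rewrite !mem_seq1 => /eqP [ev'] /eqP [evd]; move: v'x xvd; rewrite ev' evd; lia.
move=> /= /andP [a2b1 walk] asc v'in vdin.
have [a_a2 b1v'] : a < a2 /\ b1 <= v'.
  case/andP: asc => /andP [aa2 _] sv; split => //.
  by move: v'in sv; rewrite -mem_Vvs /= => v'in /head_leq_sorted; apply.
have b1x : b1 < x := leq_ltn_trans b1v' v'x.
have /scale_graphP [s1 e1] := ab; have /scale_graphP [s2 e2] := a2b1.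
case: s1 e1 (scale_edge_mono e1 e2 a_a2) => // t e1 s2t.
have tk : t < k by case/and4P: e1.
have c : complementary t a2 b1 by rewrite (complementaryE e2 tk).
have walk' : path (adjb scale_graph) (inr b1) (inl a2 :: r) by rewrite /= a2b1.
have /allP blocks := ascending_path_in_blocks tk c walk' (ascending_behead asc) c c.
have vdb := complementary_block_r c (blocks _ vdin).
apply: (scale_edge_block e1 ax b1x); apply/eqP.
by rewrite eqn_leq {1}vdb !leq_div2r // ltnW.
Qed.

Lemma scale_graph_no_left_back_edge w :
  is_walk scale_graph w -> ascending w ->
  forall e, e \in scale_graph -> ~ left_back_edge w e.
Proof.
move=> walk asc [a x] ax [ua [vc [vd [v' [uamin [_ [[vdin _] [/= aua H]]]]]]]].
case: H => /andP [_ xvd] [v'in v'x].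
have v'xvd : v' < x <= vd by rewrite v'x xvd.
move/mem_interior: v'in; rewrite mem_Vvs in vdin; subst ua.
case: w walk asc uamin vdin => [|[a0|b0] [|[a1|b1] r]] //=.
- move=> /andP [a0b1 walk] asc /(is_min_sorted_head (proj1 (andP asc))) ea vdin v'in.
  subst a.
  exact: (negP (ascending_path_no_back_edge a0b1 walk asc v'in vdin v'xvd)).
case: r => [|[a2|b1] r] //=; first by rewrite andbF.
move=> /and3P [_ a1b1 walk] asc /(is_min_sorted_head (proj1 (andP asc))) ea vdin v'in.
subst a.
have {}v'in : inr v' \in inr b1 :: r by move: v'in; rewrite inE.
have {}vdin : inr vd \in inr b1 :: r.
  move: vdin; rewrite inE => /orP [/eqP [evd]|//]; subst vd.
  have : b0 <= v'.
    apply: (head_leq_sorted (proj2 (andP asc))).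
    by rewrite (mem_Vvs [:: inr b0, inl a1, inr b1 & r]); do 2 apply: mem_behead.
  by move: v'xvd; lia.
exact: (negP (ascending_path_no_back_edge a1b1 walk (ascending_behead asc) v'in vdin v'xvd)).
Qed.

Lemma scale_graph_prbg : PRBG scale_graph.
Proof.
apply: prbg_symmetric => [u v|]; first exact: scale_graph_sym.
exact: scale_graph_no_left_back_edge.
Qed.

(* h on the bits above i, a 0 at bit i, and the i low bits of y *)
Definition splice i h y := h * 2^i.+1 + y %% 2^i.

Lemma splice_low i y : y %% 2^i < 2^i.+1.
Proof. by rewrite expnS; have := ltn_pmod y (expn2_gt0 i); lia. Qed.

Lemma splice_div i h y : splice i h y %/ 2^i.+1 = h.
Proof. by rewrite /splice divnMDl ?expn2_gt0 // divn_small ?addn0 ?splice_low. Qed.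

Lemma splice_mod i h y : splice i h y %% 2^i.+1 = y %% 2^i.
Proof. by rewrite /splice modnMDl modn_small ?splice_low. Qed.

Lemma scale_edge_splice i y : i < k -> y < 2^k.-1 ->
  scale_edge i.+1 (splice i (y %/ 2^i) y) (splice i (2^(k - i.+1) - 1 - y %/ 2^i) y).
Proof.
move=> ik yk; have hy : y %/ 2^i < 2^(k - i.+1).
  by rewrite ltn_divLR ?expn2_gt0 // -expnD (_ : k - i.+1 + i = k.-1) //; lia.
have := ltn_pmod y (expn2_gt0 i); rewrite /scale_edge /complementary !splice_mod !splice_div.
by rewrite ik eqxx expnS /=; move: hy; lia.
Qed.

Definition splice_edge (z : 'I_k * 'I_(2^k.-1)) : 'I_(2^k) * 'I_(2^k) :=
  let e := scale_edge_splice (ltn_ord z.1) (ltn_ord z.2) in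
  (Ordinal (scale_edge_lt e), Ordinal (scale_edge_lt (etrans (scale_edge_sym _ _ _) e))).

Lemma splice_edge_inj : injective splice_edge.
Proof.
move=> [i y] [i' y'] [/= eu ev].
have e := scale_edge_splice (ltn_ord i) (ltn_ord y).
have e' := scale_edge_splice (ltn_ord i') (ltn_ord y'); rewrite -eu -ev in e'.
have [/val_inj ii'] : i.+1 = i'.+1 := scale_edge_scale_uniq e e'; subst i'.
congr pair; apply: val_inj => /=.
rewrite (divn_eq y (2^i)) (divn_eq y' (2^i)).
by rewrite -(splice_div i (y %/ 2^i) y) -(splice_mod i (y %/ 2^i) y) eu splice_div splice_mod.
Qed.

Lemma card_scale_graph_ge : k * 2^k.-1 <= #|scale_graph|.
Proof.
have <- : #|splice_edge @: [set: 'I_k * 'I_(2^k.-1)]| = k * 2^k.-1.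
  by rewrite card_imset ?cardsT ?card_prod ?card_ord //; apply: splice_edge_inj.
apply/subset_leq_card/subsetP => _ /imsetP [z _ ->].
by apply/scale_graphP; exists z.1.+1; apply: scale_edge_splice.
Qed.

End Construction.

Open Scope R_scope.

Lemma INR_exp2 m : INR (2 ^ m) = 2 ^ m.
Proof. by elim: m => [|m IH] //=; rewrite expnS mulnE mult_INR IH /=; lra. Qed.

Lemma ln2_gt0 : 0 < ln 2.
Proof. by rewrite -ln_1; apply: ln_increasing; lra. Qed.

Lemma log2_exp2 m : log2 (INR (2 ^ m)) = INR m.
Proof. by rewrite INR_exp2 /log2 ln_pow; [field; have := ln2_gt0; lra | lra]. Qed.

Lemma log2_ge m n : (0 < n)%N -> (2 ^ m <= n)%N -> INR m <= log2 (INR n).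
Proof.
move=> n_gt0 mn; rewrite -log2_exp2 /log2; apply: Rmult_le_compat_r.
  by apply/Rlt_le/Rinv_0_lt_compat/ln2_gt0.
have /Rle_lt_or_eq_dec [lt|->] : INR (2 ^ m) <= INR n by apply/le_INR/leP.
  by apply/Rlt_le/ln_increasing => //; rewrite INR_exp2; apply: pow_lt; lra.
exact: Rle_refl.
Qed.

Lemma prbg_card_le_nlogn p q (E : {set 'I_p * 'I_q}) : PRBG E -> (0 < p + q)%N ->
  INR #|E| <= INR (p + q) * log2 (INR (p + q)) + 2 * INR (p + q).
Proof.
move=> prbgE n_gt0; set T := trunc_log 2 q.
have cardE : (#|E| <= (p + q) * T + 2 * (p + q))%N.
  by apply: leq_trans (card_prbg_le prbgE) _; rewrite -/T; lia.
have Tn : (2 ^ T <= p + q)%N.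
  case: (posnP q) => [q0|q_gt0]; first by rewrite /T q0 trunc_log0 expn0; lia.
  by apply: leq_trans (trunc_logP (isT : (1 < 2)%N) q_gt0) _; lia.
apply: Rle_trans (le_INR _ _ (leP cardE)) _; rewrite plus_INR !mult_INR /=.
have := Rmult_le_compat_l _ _ _ (pos_INR (p + q)) (log2_ge n_gt0 Tn); lra.
Qed.

Lemma scale_graph_card_ge_nlogn k : (0 < k)%N ->
  1/8 * (INR (2^k + 2^k) * log2 (INR (2^k + 2^k))) <= INR #|scale_graph k|.
Proof.
move=> k_gt0; rewrite addnn -mul2n -expnS log2_exp2.
have : (k.+1 * 2^k.+1 <= 8 * #|scale_graph k|)%N.
  apply: leq_trans (leq_mul (leqnn 8) (card_scale_graph_ge k)).
  rewrite (_ : 2^k.+1 = 4 * 2^k.-1)%N; last by rewrite -(expnD 2 2); congr expn; lia.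
  by rewrite mulnA [(8 * _)%N]mulnA leq_mul //; lia.
move/leP/le_INR; rewrite !mult_INR INR_exp2 (_ : INR 8 = 8); first lra.
by rewrite /=; lra.
Qed.

Theorem theorem1 :
  (exists (C : R) (N0 : nat),
     forall (p q : nat) (E : {set 'I_p * 'I_q}),
       (N0 <= p + q)%N -> PRBG E ->
       Rle (INR #|E|)
           (Rplus (Rmult (INR (p + q)) (log2 (INR (p + q)))) (Rmult C (INR (p + q)))))
  /\
  (exists c : R, Rlt 0 c /\
     forall N : nat, exists (p q : nat) (E : {set 'I_p * 'I_q}),
       [/\ (N <= p + q)%N, PRBG E &
           Rle (Rmult c (Rmult (INR (p + q)) (log2 (INR (p + q))))) (INR #|E|)]).
Proof.
split.
  by exists 2, 1%N => p q E n_gt0 prbgE; apply: prbg_card_le_nlogn.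
exists (1/8); split; first lra.
move=> N; exists (2^N.+1)%N, (2^N.+1)%N, (scale_graph N.+1); split.
- by have := ltn_expl N.+1 (isT : (1 < 2)%N); lia.
- exact: scale_graph_prbg.
- exact: scale_graph_card_ge_nlogn.
Qed.
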